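(* Let $\rho$ be a nonuniform congruence on the symplectic rook monoid $\mathcal{SR}_n$ ($n=2m\ge2$). Then there is either some $k\in\{1,\dots,m\}$ and a normal subgroup $N\unlhd S_k$, or (with $k=n$) a normal subgroup $N\unlhd W$, such that $\rho$ coincides with $\equiv_N$.
   Context: Let $m\ge 1$, $n=2m$, $\mathbf n=\{1,\dots,n\}$, $\theta(i)=n+1-i$, written $\bar i$. A proper subset $I\subset\mathbf n$ is admissible if $I\cap\theta(I)=\emptyset$; $\mathbf n$ and $\emptyset$ are also declared admissible. For an injective partial map $\sigma$ of $\mathbf n$, $I(\sigma)$ is its domain, $J(\sigma)$ its image, $\mathrm{rk}(\sigma)=|I(\sigma)|$; products are compositions of partial maps. $W=\{\sigma\in S_n:\sigma(\bar i)=\overline{\sigma(i)}\ \forall i\}$. $\mathcal{SR}_n$ is the monoid of all injective partial maps $\sigma$ of $\mathbf n$ such that either both $I(\sigma),J(\sigma)$ are proper admissible subsets, or $\sigma\in W$. A congruence is nonuniform if it is not the universal relation. Write $\sigma\mathcal H\tau$ if $I(\sigma)=I(\tau)$ and $J(\sigma)=J(\tau)$. For $k\in\{1,\dots,m\}$ and $N\unlhd S_k$, and for $\sigma\mathcal H\tau$ of rank $k$, ''$\tau=\mu(\sigma)$ with $\mu\in N$'' means: for an enumeration $a_1,\dots,a_k$ of $I(\sigma)$ with $b_i=\sigma(a_i)$, $\tau(a_i)=b_{\mu(i)}$ for all $i$. For $k=n$ and $N\unlhd W$, for $\sigma,\tau$ of rank $n$ it means $\tau=\sigma\mu$ (i.e.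 $\tau(i)=\sigma(\mu(i))$) with $\mu\in N$. The relation $\equiv_N$ on $\mathcal{SR}_n$: if $\mathrm{rk}(\sigma)<k$, then $\sigma\equiv_N\tau$ iff $\mathrm{rk}(\tau)<k$; if $\mathrm{rk}(\sigma)=k$, then $\sigma\equiv_N\tau$ iff $\sigma\mathcal H\tau$ and $\tau=\mu(\sigma)$ for some $\mu\in N$; if $\mathrm{rk}(\sigma)>k$, then $\sigma\equiv_N\tau$ iff $\sigma=\tau$. *)

(* Points 1..n are modelled by 'I_n = {0,..,n-1};
   theta(i) = n+1-i becomes rev_ord i = n-1-i. *)
From mathcomp Require Import all_boot all_fingroup.
Set Implicit Arguments. Unset Strict Implicit. Unset Printing Implicit Defensive.

Section SR.
Variable n : nat.

Definition pmap_ := {ffun 'I_n -> option 'I_n}.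

Definition theta (i : 'I_n) : 'I_n := rev_ord i.

Definition pinj (s : pmap_) : Prop :=
  forall i j y, s i = Some y -> s j = Some y -> i = j.

Definition dom (s : pmap_) : {set 'I_n} := [set i | s i != None].
Definition img (s : pmap_) : {set 'I_n} := [set j | [exists i, s i == Some j]].
Definition rk (s : pmap_) : nat := #|dom s|.

(* product = composition of partial maps: (s * t)(i) = s (t i) *)
Definition pcomp (s t : pmap_) : pmap_ := [ffun i => obind s (t i)].

Definition admissible (I : {set 'I_n}) : bool :=
  [|| I == setT, I == set0 | [disjoint I & theta @: I]].
Definition proper_admissible (I : {set 'I_n}) : bool :=
  (I \proper setT) && admissible I.

Definition Wset : {set {perm 'I_n}} :=
  [set s : {perm 'I_n} | [forall i, s (theta i) == theta (s i)]].

Definition inW (s : pmap_) : Prop :=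
  exists2 w : {perm 'I_n}, w \in Wset & forall i, s i = Some (w i).

Definition SR (s : pmap_) : Prop :=
  pinj s /\ ((proper_admissible (dom s) /\ proper_admissible (img s)) \/ inW s).

Definition congruence (rho : pmap_ -> pmap_ -> Prop) : Prop :=
  [/\ (forall s, SR s -> rho s s),
      (forall s t, SR s -> SR t -> rho s t -> rho t s),
      (forall s t u, SR s -> SR t -> SR u -> rho s t -> rho t u -> rho s u)
    & (forall s t a, SR s -> SR t -> SR a -> rho s t ->
         rho (pcomp a s) (pcomp a t) /\ rho (pcomp s a) (pcomp t a))].

Definition nonuniform (rho : pmap_ -> pmap_ -> Prop) : Prop :=
  exists s t, [/\ SR s, SR t & ~ rho s t].

Definition Hrel (s t : pmap_) : Prop := dom s = dom t /\ img s = img t.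

Definition equiv_gen (k : nat) (R : pmap_ -> pmap_ -> Prop) (s t : pmap_) : Prop :=
  if rk s < k then is_true (rk t < k)
  else if rk s == k then Hrel s t /\ R s t
  else s = t.

(* rank-k part for N <| S_k, k <= m: tau = mu(sigma) *)
Definition relS (k : nat) (N : {set {perm 'I_k}}) (s t : pmap_) : Prop :=
  exists2 mu, mu \in N &
  exists a : 'I_k -> 'I_n,
    [/\ injective a, (forall x, x \in dom s <-> exists i, a i = x)
      & forall i, t (a i) = s (a (mu i))].

(* rank-n part for N <| W: tau = sigma mu *)
Definition relW (N : {set {perm 'I_n}}) (s t : pmap_) : Prop :=
  exists2 mu, mu \in N & forall i, t i = s (mu i).

Definition equivS (k : nat) (N : {set {perm 'I_k}}) := equiv_gen k (relS N).
Definition equivW (N : {set {perm 'I_n}}) := equiv_gen n (relW N).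

End SR.

From Pilot Require Import Defs.
From mathcomp Require Import all_boot all_fingroup zify boolp.
Set Implicit Arguments. Unset Strict Implicit. Unset Printing Implicit Defensive.

(* Let j be the largest rank of an element congruent to the zero map.
   (1) If s rho t but dom s <> dom t or img s <> img t, then s rho 0: multiplying by
   the inverse of s yields a partial identity e_D congruent to some e_C with C a
   proper subset of D, and conjugating by partial transpositions of D shrinks C down
   to the empty set.  In the same way, a unit congruent to a non-unit makes rho
   universal, which nonuniformity excludes.
   (2) Any non-unit of rank at most rk x factors through x, so s rho 0 iff rk s <= j.
   (3) If s rho t, s <> t and s, t are H-related, deleting one point from dom s
   separates the images and gives an element of rank rk s - 1 congruent to 0 (for
   units, a partial identity of rank m).
   Hence rho is the identity above rank j + 1, and on rank k = j + 1 (or on W when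
   j = m) two H-related elements are congruent exactly when they differ by a
   permutation mu with P_mu rho P_1, where P_mu is mu acting on a fixed k-element
   domain; these mu form a normal subgroup. *)

Local Notation dom := Defs.dom.
Local Infix "∘" := Defs.pcomp (at level 40, left associativity).

Lemma conjg_closed_norms (gT : finGroupType) (G A : {set gT}) :
  {in A & G, forall x g, (x ^ g)%g \in A} -> (G \subset 'N(A))%g.
Proof.
move=> AJ; apply/normsP => g Gg; apply/eqP; rewrite eqEcard cardJg leqnn andbT.
by apply/subsetP => x; rewrite mem_conjg => /AJ /(_ Gg); rewrite conjgKV.
Qed.

Section SymplecticRookMonoid.
Variables m n : nat.
Hypothesis m_gt0 : 0 < m.
Hypothesis n_eq : n = m.*2.

Local Notation pm := (pmap_ n).
Local Notation theta := (@Defs.theta n).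
Implicit Types (s t : pm) (v w : {perm 'I_n}) (A B C D : {set 'I_n}).

(** * Admissible sets *)

Lemma m_lt_n : m < n.
Proof. by rewrite n_eq; lia. Qed.

Lemma thetaK : involutive theta.
Proof. exact: rev_ordK. Qed.

Lemma theta_inj : injective theta.
Proof. exact: rev_ord_inj. Qed.

Lemma theta_eq i j : (theta i == j) = (i == theta j).
Proof. by rewrite -(inj_eq theta_inj) thetaK. Qed.

Lemma theta_lt (i : 'I_n) : (theta i < m) = (m <= i).
Proof.
by rewrite /Defs.theta /=; have := ltn_ord i; move: (nat_of_ord i) n_eq => k ->; lia.
Qed.

Lemma theta_neq (i : 'I_n) : theta i != i.
Proof. by apply/eqP => E; have := theta_lt i; rewrite E; lia. Qed.

Lemma proper_admissibleP A :
  reflect (forall i, i \in A -> theta i \notin A) (proper_admissible A).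
Proof.
apply: (iffP andP) => [[AT /or3P [/eqP EA | /eqP EA | dAA]] i iA | HA].
- by rewrite EA properxx in AT.
- by rewrite EA inE in iA.
- by rewrite (disjointFl dAA (imset_f theta iA)).
split.
- apply/properP; split; first exact: subsetT.
  have i0 : 'I_n := Ordinal (ltn_trans m_gt0 m_lt_n).
  by have [/HA|] := boolP (i0 \in A); [exists (theta i0) | exists i0].
- apply/or3P; constructor 3; rewrite -setI_eq0; apply/eqP/setP => x.
  rewrite !inE; apply/negbTE/andP => -[xA /imsetP [y yA Exy]].
  by move: (HA y yA); rewrite -Exy xA.
Qed.

Lemma proper_admissibleS A B :
  A \subset B -> proper_admissible B -> proper_admissible A.
Proof.
move=> sAB /proper_admissibleP HB; apply/proper_admissibleP => i /(subsetP sAB) /HB.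
exact/contra/subsetP.
Qed.

Lemma proper_admissible_card A : proper_admissible A -> #|A| <= m.
Proof.
move=> /proper_admissibleP HA.
have AthA : A :&: theta @: A = set0.
  apply/setP => x; rewrite !inE; apply/negbTE/andP => -[xA /imsetP [y yA Exy]].
  by move: (HA y yA); rewrite -Exy xA.
have : #|A| + #|theta @: A| <= n.
  rewrite -cardsUI AthA cards0 addn0.
  exact: leq_trans (max_card _) (eq_leq (card_ord n)).
rewrite card_imset; last exact: theta_inj.
by rewrite addnn => H; rewrite -leq_double -n_eq.
Qed.

Lemma proper_admissible2 c d : c != theta d -> proper_admissible [set c; d].
Proof.
move=> cd; apply/proper_admissibleP => i; rewrite !inE.
case/orP => /eqP ->; rewrite negb_or.
- by rewrite theta_neq theta_eq.
- by rewrite eq_sym cd theta_neq.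
Qed.

Definition theta_transversal D := forall i, (theta i \in D) = (i \notin D).

Lemma transversal_proper_admissible D : theta_transversal D -> proper_admissible D.
Proof. by move=> HD; apply/proper_admissibleP => i iD; rewrite HD iD. Qed.

Lemma card_transversal D : theta_transversal D -> #|D| = m.
Proof.
move=> HD; have imD : theta @: D = ~: D.
  by apply/setP => i; rewrite inE -HD -{1}(thetaK i) (mem_imset _ _ theta_inj).
have := cardsC D; rewrite -imD card_imset; last exact: theta_inj.
by rewrite card_ord addnn => H; apply: double_inj; rewrite -n_eq.
Qed.

Lemma transversal_extension A : proper_admissible A ->
  exists2 D, theta_transversal D & A \subset D.
Proof.
move=> /proper_admissibleP HA.
exists (A :|: [set i : 'I_n | (i < m) && (theta i \notin A)]); last exact: subsetUl.
move=> i; rewrite !inE thetaK theta_lt.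
have [iA|iA] := boolP (i \in A); first by rewrite (negbTE (HA i iA)) andbF.
by rewrite /= negb_and negbK -leqNgt orbC andbT.
Qed.

(** * Partial injections and the monoid SR_n *)

Definition pzero : pm := [ffun => None].
Definition pid_on D : pm := [ffun x => if x \in D then Some x else None].
Definition pperm w : pm := [ffun x => Some (w x)].
Definition pinv s : pm := [ffun y => [pick x | s x == Some y]].

Definition nonunit s :=
  [/\ pinj s, proper_admissible (dom s) & proper_admissible (img s)].

Lemma domE s x : (x \in dom s) = (s x != None).
Proof. by rewrite inE. Qed.

Lemma imgP s y : reflect (exists x, s x = Some y) (y \in img s).
Proof.
rewrite inE; apply: (iffP existsP) => [[x /eqP]|[x sx]]; exists x => //.
by rewrite sx.
Qed.

Lemma pcompE s t x : (s ∘ t) x = obind s (t x).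
Proof. by rewrite ffunE. Qed.

Lemma pcompA : associative (@Defs.pcomp n).
Proof. by move=> a b c; apply/ffunP => x; rewrite !pcompE; case: (c x) => //= y; rewrite pcompE. Qed.

Lemma pcomp0l s : pzero ∘ s = pzero.
Proof. by apply/ffunP => x; rewrite pcompE ffunE; case: (s x) => //= y; rewrite ffunE. Qed.

Lemma pcomp0r s : s ∘ pzero = pzero.
Proof. by apply/ffunP => x; rewrite pcompE !ffunE. Qed.

Lemma pinj_comp s t : pinj s -> pinj t -> pinj (s ∘ t).
Proof.
move=> Is It i j y; rewrite !pcompE.
case ti: (t i) => [a|] //=; case tj: (t j) => [b|] //= sa sb.
by move: ti tj; rewrite (Is _ _ _ sa sb) => ti /(It _ _ _ ti).
Qed.

Lemma dom_comp_sub s t : dom (s ∘ t) \subset dom t.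
Proof. by apply/subsetP => x; rewrite !domE pcompE; case: (t x). Qed.

Lemma img_comp_sub s t : img (s ∘ t) \subset img s.
Proof.
apply/subsetP => y /imgP [x]; rewrite pcompE; case: (t x) => //= z sz.
by apply/imgP; exists z.
Qed.

Lemma dom_comp s t : img t \subset dom s -> dom (s ∘ t) = dom t.
Proof.
move=> ts; apply/setP => x; rewrite !domE pcompE.
case tx: (t x) => [y|] //=; rewrite -domE; apply: (subsetP ts).
by apply/imgP; exists x.
Qed.

Lemma pinvE s x y : pinj s -> (pinv s y = Some x) <-> (s x = Some y).
Proof.
move=> Is; rewrite ffunE; case: pickP => [z /eqP sz|none].
- by split=> [[<-] //|sx]; congr Some; exact: Is sz sx.
- by split=> // sx; move: (none x); rewrite sx eqxx.
Qed.

Lemma pinv_eqNone s y : (pinv s y == None) = (y \notin img s).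
Proof.
rewrite ffunE; case: pickP => [z /eqP sz|none] /=.
- by apply/esym/negbF/imgP; exists z.
- by apply/esym/negP => /imgP [x sx]; move: (none x); rewrite sx eqxx.
Qed.

Lemma pinj_pinv s : pinj s -> pinj (pinv s).
Proof.
by move=> Is i j y /(pinvE _ _ Is) si /(pinvE _ _ Is); rewrite si => -[].
Qed.

Lemma dom_pinv s : dom (pinv s) = img s.
Proof. by apply/setP => y; rewrite domE pinv_eqNone negbK. Qed.

Lemma img_pinv s : pinj s -> img (pinv s) = dom s.
Proof.
move=> Is; apply/setP => x; rewrite domE.
apply/imgP/idP => [[y /(pinvE _ _ Is) ->] //|].
by case sx: (s x) => [y|] // _; exists y; apply/(pinvE _ _ Is).
Qed.

Lemma pinvK s : pinj s -> pinv (pinv s) = s.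
Proof.
move=> Is; apply/ffunP => x; case sx: (s x) => [y|].
- by apply/(pinvE _ _ (pinj_pinv Is))/(pinvE _ _ Is).
- by apply/eqP; rewrite pinv_eqNone img_pinv // domE sx.
Qed.

Lemma pinv_comp s t : pinj s -> pinj t -> pinv (s ∘ t) = pinv t ∘ pinv s.
Proof.
move=> Is It; apply/ffunP => z; rewrite pcompE.
case psz: (pinv s z) => [y|] /=; last first.
  apply/eqP; rewrite pinv_eqNone; apply/imgP => -[x]; rewrite pcompE.
  by case: (t x) => [y|] //= /(pinvE _ _ Is); rewrite psz.
move/(pinvE _ _ Is): psz => sy; case pty: (pinv t y) => [x|].
  by move/(pinvE _ _ It): pty => tx; apply/(pinvE _ _ (pinj_comp Is It)); rewrite pcompE tx.
apply/eqP; rewrite pinv_eqNone; apply/imgP => -[x]; rewrite pcompE.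
case tx: (t x) => [y'|] //= sy'; rewrite -(Is _ _ _ sy sy') in tx.
by move/eqP: pty; rewrite pinv_eqNone => /imgP; apply; exists x.
Qed.

Lemma pinv0 : pinv pzero = pzero.
Proof. by apply/ffunP => y; rewrite [RHS]ffunE; apply/eqP; rewrite pinv_eqNone; apply/imgP => -[x]; rewrite ffunE. Qed.

Lemma pinj_pid_on D : pinj (pid_on D).
Proof. by move=> i j y; rewrite !ffunE; case: (i \in D) => // -[->]; case: (j \in D) => // -[]. Qed.

Lemma dom_pid_on D : dom (pid_on D) = D.
Proof. by apply/setP => x; rewrite domE ffunE; case: (x \in D). Qed.

Lemma img_pid_on D : img (pid_on D) = D.
Proof.
apply/setP => y; apply/imgP/idP => [[x]|yD]; last by exists y; rewrite ffunE yD.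
by rewrite ffunE; case: ifP => // xD [<-].
Qed.

Lemma pid_on0 : pid_on set0 = pzero.
Proof. by apply/ffunP => x; rewrite !ffunE inE. Qed.

Lemma pid_onI A B : pid_on A ∘ pid_on B = pid_on (A :&: B).
Proof.
apply/ffunP => x; rewrite pcompE !ffunE inE.
by case: (x \in B); rewrite ?andbT ?andbF //= ffunE.
Qed.

Lemma pcomp_pid_on_r s D : dom s \subset D -> s ∘ pid_on D = s.
Proof.
move=> sD; apply/ffunP => x; rewrite pcompE ffunE.
case: ifP => //= xD; apply/esym/eqP; rewrite -[_ == _]negbK -domE.
by apply: contraFN xD; apply: (subsetP sD).
Qed.

Lemma pcomp_pid_on_dom s D : s ∘ pid_on (D :&: dom s) = s ∘ pid_on D.
Proof.
apply/ffunP => x; rewrite !pcompE !ffunE inE domE.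
by case: (x \in D); case sx: (s x).
Qed.

Lemma dom_comp_pid_on s D : dom (s ∘ pid_on D) = D :&: dom s.
Proof. by apply/setP => x; rewrite in_setI !domE pcompE ffunE; case: (x \in D). Qed.

Lemma pinv_comp_l s : pinj s -> pinv s ∘ s = pid_on (dom s).
Proof.
move=> Is; apply/ffunP => x; rewrite pcompE ffunE domE.
by case sx: (s x) => [y|] //=; apply/(pinvE _ _ Is).
Qed.

Lemma pinj_pperm w : pinj (pperm w).
Proof. by move=> i j y; rewrite !ffunE => -[<-] [] /perm_inj. Qed.

Lemma pperm_comp v w : pperm v ∘ pperm w = pperm (w * v).
Proof. by apply/ffunP => x; rewrite pcompE !ffunE /= ffunE permM. Qed.

Lemma pperm1_comp s : pperm 1 ∘ s = s.
Proof. by apply/ffunP => x; rewrite pcompE; case: (s x) => //= y; rewrite ffunE perm1. Qed.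

Lemma pcomp_pperm1 s : s ∘ pperm 1 = s.
Proof. by apply/ffunP => x; rewrite pcompE ffunE perm1. Qed.

Lemma dom_pperm w : dom (pperm w) = setT.
Proof. by apply/setP => x; rewrite domE ffunE inE. Qed.

Lemma img_pperm w : img (pperm w) = setT.
Proof. by apply/setP => y; rewrite in_setT; apply/imgP; exists (w^-1 y)%g; rewrite ffunE permKV. Qed.

Lemma rk_pperm w : rk (pperm w) = n.
Proof. by rewrite /rk dom_pperm cardsT card_ord. Qed.

Lemma img_pperm_comp w s : img (pperm w ∘ s) = w @: img s.
Proof.
apply/setP => y; apply/imgP/imsetP => [[x]|[z /imgP [x sx] ->]].
- rewrite pcompE; case sx: (s x) => [z|] //=; rewrite ffunE => -[<-].
  by exists z => //; apply/imgP; exists x.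
- by exists x; rewrite pcompE sx /= ffunE.
Qed.

Lemma dom_comp_pperm s w : dom (s ∘ pperm w) = (w^-1)%g @: dom s.
Proof.
apply/setP => x; rewrite domE pcompE ffunE /= -domE -[x in RHS](permK w).
by rewrite (mem_imset _ _ (@perm_inj _ _)).
Qed.

Lemma WsetP w : reflect (forall i, w (theta i) = theta (w i)) (w \in Wset n).
Proof. by rewrite inE; apply: (iffP forallP) => H i; apply/eqP. Qed.

Lemma group_set_Wset : group_set (Wset n).
Proof.
apply/group_setP; split; first by apply/WsetP => i; rewrite !perm1.
by move=> v w /WsetP Hv /WsetP Hw; apply/WsetP => i; rewrite !permM Hv Hw.
Qed.

Canonical Wset_group := Group group_set_Wset.

Lemma proper_admissible_imset w A :
  w \in Wset n -> proper_admissible A -> proper_admissible (w @: A).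
Proof.
move=> /WsetP Hw /proper_admissibleP HA; apply/proper_admissibleP => _ /imsetP [i iA ->].
by rewrite -Hw (mem_imset _ _ (@perm_inj _ w)) HA.
Qed.

Lemma SR_pperm w : w \in Wset n -> SR (pperm w).
Proof. by move=> Ww; split; [exact: pinj_pperm | right; exists w => // i; rewrite ffunE]. Qed.

Lemma SR_nonunit s : nonunit s -> SR s.
Proof. by case=> *; split => //; left. Qed.

Lemma SR_pinj s : SR s -> pinj s.
Proof. by case. Qed.

Lemma SR_cases s : SR s -> (exists2 w, w \in Wset n & s = pperm w) \/ nonunit s.
Proof.
case=> Is [[ds ims]|[w Ww sw]]; [by right | left; exists w => //].
by apply/ffunP => x; rewrite sw ffunE.
Qed.

Lemma SR_pid_on D : proper_admissible D -> SR (pid_on D).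
Proof. by move=> pD; apply: SR_nonunit; rewrite /nonunit dom_pid_on img_pid_on; split => //; exact: pinj_pid_on. Qed.

Lemma SR_zero : SR pzero.
Proof.
rewrite -pid_on0; apply: SR_pid_on; apply/proper_admissibleP => i.
by rewrite inE.
Qed.

Lemma SR_comp s t : SR s -> SR t -> SR (s ∘ t).
Proof.
move=> Ss St; have Ist := pinj_comp (SR_pinj Ss) (SR_pinj St).
case: (SR_cases Ss) => [[v Wv sv]|[_ ds ims]]; case: (SR_cases St) => [[w Ww tw]|[_ dt it]].
- by rewrite sv tw pperm_comp; apply/SR_pperm/groupM.
- apply: SR_nonunit; split => //; first exact: proper_admissibleS (dom_comp_sub _ _) dt.
  by rewrite sv img_pperm_comp; apply: proper_admissible_imset.
- apply: SR_nonunit; split => //; last exact: proper_admissibleS (img_comp_sub _ _) ims.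
  by rewrite tw dom_comp_pperm; apply: proper_admissible_imset; rewrite ?groupV.
- apply: SR_nonunit; split => //.
  + exact: proper_admissibleS (dom_comp_sub _ _) dt.
  + exact: proper_admissibleS (img_comp_sub _ _) ims.
Qed.

Lemma pinv_pperm w : pinv (pperm w) = pperm (w^-1)%g.
Proof. by apply/ffunP => y; rewrite [RHS]ffunE; apply/(pinvE _ _ (@pinj_pperm w)); rewrite ffunE permKV. Qed.

Lemma SR_inv s : SR s -> SR (pinv s).
Proof.
move=> Ss; case: (SR_cases Ss) => [[w Ww ->]|[Is ds ims]].
- by rewrite pinv_pperm; apply/SR_pperm/groupVr.
- by apply: SR_nonunit; split; rewrite ?dom_pinv ?img_pinv //; exact: pinj_pinv.
Qed.

Lemma nonunit_rank s : nonunit s -> rk s <= m.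
Proof. by case=> _ ds _; apply: proper_admissible_card. Qed.

Lemma nonunit_of_rank s : SR s -> rk s < n -> nonunit s.
Proof. by move=> Ss; case: (SR_cases Ss) => // -[w _ ->]; rewrite rk_pperm ltnn. Qed.

Lemma rank_lt_of_notin s c : c \notin dom s -> rk s < n.
Proof.
move=> cs; rewrite /rk -[X in _ < X](card_ord n) -cardsT.
by apply/proper_card/properP; split => //; exists c.
Qed.

Lemma SR_rank_lt_n s : SR s -> (rk s < n) = (rk s <= m).
Proof.
move=> Ss; case: (SR_cases Ss) => [[w _ ->]|ns].
- by rewrite rk_pperm ltnn; apply/esym/negbTE; rewrite -ltnNge m_lt_n.
- by rewrite nonunit_rank // (leq_ltn_trans (nonunit_rank ns) m_lt_n).
Qed.

Lemma exists_pinj_into A B : #|A| <= #|B| ->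
  exists f : pm, [/\ pinj f, dom f = A & img f \subset B].
Proof.
move=> AB.
exists [ffun x => if x \in A then Some (nth x (enum B) (index x (enum A))) else None].
have idxB x : x \in A -> index x (enum A) < size (enum B).
  by move=> xA; rewrite -cardE; apply: leq_trans AB; rewrite cardE index_mem mem_enum.
split.
- move=> i j y; rewrite !ffunE; case: ifP => // iA; case: ifP => // jA [<-] [] /eqP.
  rewrite (set_nth_default i) ?idxB // nth_uniq ?idxB ?enum_uniq // => /eqP Eij.
  have iA' : i \in enum A by rewrite mem_enum.
  by rewrite -(nth_index i iA') -Eij nth_index ?mem_enum.
- by apply/setP => x; rewrite domE ffunE; case: ifP.
- apply/subsetP => y /imgP [x]; rewrite ffunE; case: ifP => // xA [<-].
  by rewrite -mem_enum; apply/mem_nth/idxB.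
Qed.

(** * Partial permutations of a rank-k domain *)

Section Lift.
Variable k : nat.
Hypothesis k_le_m : k <= m.
Implicit Types (a : 'I_k -> 'I_n) (mu nu : {perm 'I_k}).

Definition widenk (i : 'I_k) : 'I_n := widen_ord (ltnW (leq_ltn_trans k_le_m m_lt_n)) i.

Lemma widenk_inj : injective widenk.
Proof. by move=> i j /(congr1 val) ij; apply: val_inj. Qed.

Definition prefix : {set 'I_n} := [set x : 'I_n | x < k].

Lemma proper_admissible_prefix : proper_admissible prefix.
Proof.
apply/proper_admissibleP => i; rewrite !inE -leqNgt /Defs.theta /=.
by have := ltn_ord i; move: (nat_of_ord i) n_eq => x ->; lia.
Qed.

Definition plift a : pm := [ffun x => omap a (insub (val x))].

Definition lperm mu : pm := plift (widenk \o mu).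

Lemma pliftE a i : plift a (widenk i) = Some (a i).
Proof. by rewrite ffunE insubT //= => ?; congr (Some (a _)); apply: val_inj. Qed.

Lemma plift_out a x : x \notin prefix -> plift a x = None.
Proof. by rewrite inE => kx; rewrite ffunE insubN. Qed.

Lemma pliftP a x :
  (exists2 i, x = widenk i & plift a x = Some (a i)) \/ (x \notin prefix /\ plift a x = None).
Proof.
have [xk|xk] := boolP (x \in prefix); last by right; rewrite plift_out.
rewrite inE in xk; have -> : x = widenk (Ordinal xk) by apply: val_inj.
by left; exists (Ordinal xk); rewrite ?pliftE.
Qed.

Lemma dom_plift a : dom (plift a) = prefix.
Proof.
apply/setP => x; rewrite domE.
by case: (pliftP a x) => [[i -> ->]|[/negbTE -> ->]]; rewrite ?inE /= ?ltn_ord.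
Qed.

Lemma pinj_plift a : injective a -> pinj (plift a).
Proof.
move=> Ia x y z; case: (pliftP a x) => [[i -> ->]|[_ ->]] //.
by case: (pliftP a y) => [[j -> ->]|[_ ->]] // [<-] [] /Ia ->.
Qed.

Lemma SR_plift a A : injective a -> (forall i, a i \in A) -> proper_admissible A -> SR (plift a).
Proof.
move=> Ia aA pA; apply: SR_nonunit; split; first exact: pinj_plift.
- by rewrite dom_plift; exact: proper_admissible_prefix.
- apply: proper_admissibleS pA; apply/subsetP => y /imgP [x].
  by case: (pliftP a x) => [[i _ ->] [<-]|[_ ->]].
Qed.

Lemma SR_lperm mu : SR (lperm mu).
Proof.
apply: (SR_plift (A := prefix)); last exact: proper_admissible_prefix.
- by move=> i j /widenk_inj /perm_inj.
- by move=> i; rewrite inE /=.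
Qed.

Lemma lperm_comp mu nu : lperm nu ∘ lperm mu = lperm (mu * nu).
Proof.
apply/ffunP => x; rewrite pcompE /lperm.
case: (pliftP (widenk \o mu) x) => [[i -> ->]|[xk ->]] /=; first by rewrite !pliftE /= permM.
by rewrite plift_out.
Qed.

(* With [a] enumerating [dom s], [twist s a nu] is the element written nu(s) in the
   paper: it sends [a i] to [s (a (nu i))]. *)
Definition twist s a nu : pm := s ∘ plift a ∘ lperm nu ∘ pinv (plift a).

Lemma twistE s a nu i : injective a -> twist s a nu (a i) = s (a (nu i)).
Proof.
move=> Ia; have ai : pinv (plift a) (a i) = Some (widenk i).
  by apply/(pinvE _ _ (pinj_plift Ia)); rewrite pliftE.
by rewrite /twist pcompE ai /= pcompE /lperm pliftE /= pcompE pliftE.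
Qed.

Lemma twist_out s a nu x : (forall i, a i != x) -> twist s a nu x = None.
Proof.
move=> ax; rewrite /twist pcompE; suff -> : pinv (plift a) x = None by [].
apply/eqP; rewrite pinv_eqNone; apply/imgP => -[y].
by case: (pliftP a y) => [[i _ ->] [/eqP]|[_ ->]] //; rewrite (negbTE (ax i)).
Qed.

Lemma twist_eq s t a mu : injective a -> (forall x, x \in dom s <-> exists i, a i = x) ->
  dom t = dom s -> (forall i, t (a i) = s (a (mu i))) -> t = twist s a mu.
Proof.
move=> Ia Ha dts tas; apply/ffunP => x; have [/Ha [i <-]|xs] := boolP (x \in dom s).
  by rewrite twistE.
rewrite twist_out; last by move=> i; apply: contraNneq xs => <-; apply/Ha; exists i.
by apply/eqP; move: xs; rewrite -dts domE negbK.
Qed.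

Lemma twist1 s a : injective a -> (forall x, x \in dom s <-> exists i, a i = x) ->
  s = twist s a 1.
Proof. by move=> Ia Ha; apply: twist_eq => // i; rewrite perm1. Qed.

Lemma untwist s t a nu : pinj s -> injective a -> (forall i, a i \in dom s) ->
  t = twist s a nu -> pinv (plift a) ∘ pinv s ∘ t ∘ plift a = lperm nu.
Proof.
move=> Is Ia aD ->; apply/ffunP => x; rewrite pcompE.
case: (pliftP a x) => [[i -> ->]|[xk ->]] /=; last by rewrite plift_out.
rewrite pcompE twistE //; move: (aD (nu i)); rewrite domE.
case sa: (s (a (nu i))) => [y|] // _; rewrite /= pcompE.
have -> : pinv s y = Some (a (nu i)) by apply/(pinvE _ _ Is).
by rewrite /= pliftE; apply/(pinvE _ _ (pinj_plift Ia)); rewrite pliftE.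
Qed.

Lemma exists_enum_dom s : rk s = k ->
  exists a : 'I_k -> 'I_n, injective a /\ forall x, x \in dom s <-> exists i, a i = x.
Proof.
move=> rks; exists (fun i => enum_val (cast_ord (esym rks) i)); split.
  by move=> i j /enum_val_inj /cast_ord_inj.
move=> x; split=> [xs|[i <-]]; last exact: enum_valP.
by exists (cast_ord rks (enum_rank_in xs x)); rewrite cast_ordK enum_rankK_in.
Qed.

Lemma exists_perm_of_Hrel s t a : pinj t -> Hrel s t -> injective a ->
  (forall x, x \in dom s <-> exists i, a i = x) ->
  exists mu : {perm 'I_k}, forall i, t (a i) = s (a (mu i)).
Proof.
move=> It [ds_dt is_it] Ia Ha.
have ex i : exists j, s (a j) == t (a i).
  have : a i \in dom t by rewrite -ds_dt; apply/Ha; exists i.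
  rewrite domE; case ta: (t (a i)) => [y|] // _.
  have /imgP [x sx] : y \in img s by rewrite is_it; apply/imgP; exists (a i).
  have /Ha [j aj] : x \in dom s by rewrite domE sx.
  by exists j; rewrite aj sx.
pose f i := xchoose (ex i).
have fP i : s (a (f i)) = t (a i) := eqP (xchooseP (ex i)).
have f_inj : injective f.
  move=> i j fij; apply: Ia; have := fP i; rewrite fij fP.
  have : a i \in dom t by rewrite -ds_dt; apply/Ha; exists i.
  by rewrite domE; case ta: (t (a i)) => [y|] // _ /(It _ _ _ ta).
by exists (perm f_inj) => i; rewrite permE fP.
Qed.

End Lift.

Section CongruenceLaws.
Variable rho : pm -> pm -> Prop.
Hypothesis rhoC : congruence rho.

Lemma congr_refl s : SR s -> rho s s.
Proof. by case: rhoC => H _ _ _; apply: H. Qed.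

Lemma congr_sym s t : SR s -> SR t -> rho s t -> rho t s.
Proof. by case: rhoC => _ H _ _; apply: H. Qed.

Lemma congr_trans s t u : SR s -> SR t -> SR u -> rho s t -> rho t u -> rho s u.
Proof. by case: rhoC => _ _ H _; apply: H. Qed.

Lemma congr_mull a s t : SR a -> SR s -> SR t -> rho s t -> rho (a ∘ s) (a ∘ t).
Proof. by case: rhoC => _ _ _ H Sa Ss St st; case: (H s t a Ss St Sa st). Qed.

Lemma congr_mulr a s t : SR a -> SR s -> SR t -> rho s t -> rho (s ∘ a) (t ∘ a).
Proof. by case: rhoC => _ _ _ H Sa Ss St st; case: (H s t a Ss St Sa st). Qed.

End CongruenceLaws.

Lemma congruence_pinv rho : congruence rho -> congruence (fun s t => rho (pinv s) (pinv t)).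
Proof.
move=> rhoC; split => [s Ss|s t Ss St|s t u Ss St Su|s t a Ss St Sa st] /=.
- exact: (congr_refl rhoC (SR_inv Ss)).
- exact: (congr_sym rhoC (SR_inv Ss) (SR_inv St)).
- exact: (congr_trans rhoC (SR_inv Ss) (SR_inv St) (SR_inv Su)).
- have [Sa' Ss' St'] := And3 (SR_inv Sa) (SR_inv Ss) (SR_inv St).
  have [Ia Is It] := And3 (SR_pinj Sa) (SR_pinj Ss) (SR_pinj St).
  by rewrite !pinv_comp //; split; [apply: congr_mulr | apply: congr_mull].
Qed.

Section DomainDefect.
Variable rho : pm -> pm -> Prop.
Hypothesis rhoC : congruence rho.

Lemma pid_on_shrink_step D C : proper_admissible D -> C \proper D -> C != set0 ->
  rho (pid_on D) (pid_on C) ->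
  exists C', [/\ C' \proper D, #|C'| < #|C| & rho (pid_on D) (pid_on C')].
Proof.
move=> pD /properP [sCD [p pD' pC]] /set0Pn [c cC] DC.
have cD := subsetP sCD c cC.
have tD x : (tperm c p x \in D) = (x \in D) by case: tpermP => [->|->|]; rewrite ?cD ?pD'.
(* Conjugating [pid_on C] by the permutation [pi] of [D] swapping [c \in C] and
   [p \in D :\: C] gives [pid_on C'] with [c \notin C']. *)
pose pi : pm := [ffun x => if x \in D then Some (tperm c p x) else None].
have Spi : SR pi.
  apply: SR_nonunit; split.
  - by move=> i j y; rewrite !ffunE; case: ifP => // _; case: ifP => // _ [<-] [] /perm_inj.
  - apply: proper_admissibleS pD; apply/subsetP => x; rewrite domE ffunE; by case: ifP.
  - apply: proper_admissibleS pD; apply/subsetP => y /imgP [x]; rewrite ffunE.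
    by case: ifP => // xD [<-]; rewrite tD.
pose C' := [set x in D | tperm c p x \in C].
have pC' : proper_admissible C'.
  by apply: proper_admissibleS pD; apply/subsetP => x; rewrite inE => /andP [].
have piD : pi ∘ (pid_on D ∘ pi) = pid_on D.
  apply/ffunP => x; rewrite !pcompE !ffunE; case: ifP => //= xD.
  by rewrite ffunE tD xD /= ffunE tD xD tpermK.
have piC : pi ∘ (pid_on C ∘ pi) = pid_on C'.
  apply/ffunP => x; rewrite !pcompE [pid_on C' x]ffunE [pi x]ffunE inE; case: ifP => //= xD.
  by rewrite ffunE; case: ifP => //= _; rewrite ffunE tD xD tpermK.
have SD := SR_pid_on pD; have SC := SR_pid_on (proper_admissibleS sCD pD).
have DC' : rho (pid_on D) (pid_on C').
  have := congr_mull rhoC Spi (SR_comp SD Spi) (SR_comp SC Spi) (congr_mulr rhoC Spi SD SC DC).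
  by rewrite piD piC.
have CC' : rho (pid_on C) (pid_on (C :&: C')).
  by have := congr_mull rhoC SC SD (SR_pid_on pC') DC'; rewrite !pid_onI (setIidPl sCD).
exists (C :&: C'); split.
- apply/properP; split; first exact: subset_trans (subsetIl _ _) sCD.
  by exists p => //; rewrite !inE (negbTE pC).
- apply: proper_card; apply/properP; split; first exact: subsetIl.
  by exists c => //; rewrite !inE tpermL (negbTE pC) !andbF.
- apply: (congr_trans rhoC SD SC _ DC CC').
  by apply/SR_pid_on/(proper_admissibleS _ pC')/subsetIr.
Qed.

Lemma pid_on_zero_of_proper D C : proper_admissible D -> C \proper D ->
  rho (pid_on D) (pid_on C) -> rho (pid_on D) pzero.
Proof.
move=> pD; have [k Ck] := ubnP #|C|; elim: k C Ck => // k IH C Ck CD DC.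
have [C0|C0] := eqVneq C set0; first by rewrite C0 pid_on0 in DC.
have [C' [C'D C'C DC']] := pid_on_shrink_step pD CD C0 DC.
exact: IH C' (leq_trans C'C Ck) C'D DC'.
Qed.

Lemma rho_pid_on_restrict D y : proper_admissible D -> SR y ->
  rho (pid_on D) y -> rho (pid_on D) (pid_on (D :&: dom y)).
Proof.
move=> pD Sy Dy; have pE : proper_admissible (D :&: dom y).
  by apply: proper_admissibleS pD; apply: subsetIl.
have [SD SE] := (SR_pid_on pD, SR_pid_on pE).
have Dy' : rho (pid_on D) (y ∘ pid_on (D :&: dom y)).
  by rewrite pcomp_pid_on_dom; have := congr_mulr rhoC SD SD Sy Dy; rewrite pid_onI setIid.
have Ey : rho (pid_on (D :&: dom y)) (y ∘ pid_on (D :&: dom y)).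
  by have := congr_mulr rhoC SE SD Sy Dy; rewrite pid_onI (setIidPr (subsetIl _ _)).
exact: (congr_trans rhoC SD (SR_comp Sy SE) SE Dy' (congr_sym rhoC SE (SR_comp Sy SE) Ey)).
Qed.

Lemma rho_zero_of_dom_diff s t c : SR s -> SR t -> proper_admissible (dom s) ->
  rho s t -> c \in dom s -> c \notin dom t -> rho s pzero.
Proof.
move=> Ss St pD st cs ct; have SD := SR_pid_on pD.
have Sy : SR (pinv s ∘ t) by apply/SR_comp/St/SR_inv.
have Dy : rho (pid_on (dom s)) (pinv s ∘ t).
  by rewrite -(pinv_comp_l (SR_pinj Ss)); exact: (congr_mull rhoC (SR_inv Ss) Ss St st).
have D0 : rho (pid_on (dom s)) pzero.
  apply: pid_on_zero_of_proper pD _ (rho_pid_on_restrict pD Sy Dy).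
  apply/properP; split; first exact: subsetIl.
  exists c => //; rewrite in_setI cs domE pcompE /=.
  by move: ct; rewrite domE negbK => /eqP ->.
by have := congr_mull rhoC Ss SD SR_zero D0; rewrite pcomp_pid_on_r // pcomp0r.
Qed.

End DomainDefect.

Lemma rho_zero_of_img_diff rho s t b : congruence rho -> SR s -> SR t ->
  proper_admissible (img s) -> rho s t -> b \in img s -> b \notin img t -> rho s pzero.
Proof.
move=> rhoC Ss St pI st bs bt; have [Is It] := (SR_pinj Ss, SR_pinj St).
have := rho_zero_of_dom_diff (congruence_pinv rhoC) (SR_inv Ss) (SR_inv St) (c := b).
by rewrite /= !dom_pinv (pinvK Is) (pinvK It) pinv0; apply.
Qed.

Section Ideal.
Variable rho : pm -> pm -> Prop.
Hypothesis rhoC : congruence rho.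

Definition universal := forall s, SR s -> rho s pzero.

Lemma universal_of_unit_zero w : w \in Wset n -> rho (pperm w) pzero -> universal.
Proof.
move=> Ww w0 a Sa; have Sb : SR (a ∘ pperm w^-1) by apply/SR_comp/SR_pperm/groupVr.
have := congr_mull rhoC Sb (SR_pperm Ww) SR_zero w0.
by rewrite -pcompA pperm_comp mulgV pcomp_pperm1 pcomp0r.
Qed.

Lemma rho_zero_of_rank_le x y : SR x -> proper_admissible (dom x) -> nonunit y ->
  rk y <= rk x -> rho x pzero -> rho y pzero.
Proof.
move=> Sx px [Iy dy iy] yx x0; have Sy : SR y by apply: SR_nonunit.
have [b [Ib db ib]] := exists_pinj_into yx.
have Sb : SR b.
  by apply: SR_nonunit; split; rewrite ?db //; apply: proper_admissibleS ib px.
have Sxb := SR_comp Sx Sb.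
have yxb : y ∘ pinv (x ∘ b) ∘ (x ∘ b) = y.
  by rewrite -pcompA (pinv_comp_l (SR_pinj Sxb)) dom_comp // db pcomp_pid_on_r.
have xb0 : rho (x ∘ b) pzero by have := congr_mulr rhoC Sb Sx SR_zero x0; rewrite pcomp0l.
have := congr_mull rhoC (SR_comp Sy (SR_inv Sxb)) Sxb SR_zero xb0.
by rewrite pcomp0r yxb.
Qed.

Lemma universal_of_rho_unit_nonunit w t : w \in Wset n -> nonunit t ->
  rho (pperm w) t -> universal.
Proof.
move=> Ww nt wt; have St := SR_nonunit nt; have [_ dt _] := nt.
have Swi : SR (pperm w^-1) by apply/SR_pperm/groupVr.
have Sx : SR (pperm w^-1 ∘ t) := SR_comp Swi St.
have one_x : rho (pperm 1) (pperm w^-1 ∘ t).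
  by have := congr_mull rhoC Swi (SR_pperm Ww) St wt; rewrite pperm_comp mulgV.
have [_ [c _ ct]] := properP (proj1 (andP dt)).
have cx : c \notin dom (pperm w^-1 ∘ t).
  by apply: contra ct; apply: (subsetP (dom_comp_sub _ _)).
(* Restricting [pperm 1 rho pperm w^-1 ∘ t] to a transversal through [c] gives a
   rank-m partial identity congruent to 0, hence so is every non-unit. *)
have cc : c != theta c by rewrite eq_sym theta_neq.
have [H HH cH] := transversal_extension (proper_admissible2 cc).
have pH := transversal_proper_admissible HH; have SH := SR_pid_on pH.
have Hx : rho (pid_on H) (pperm w^-1 ∘ t ∘ pid_on H).
  by have := congr_mulr rhoC SH (SR_pperm (group1 _)) Sx one_x; rewrite pperm1_comp.
have nx : nonunit (pperm w^-1 ∘ t) := nonunit_of_rank Sx (rank_lt_of_notin cx).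
have H0 : rho (pid_on H) pzero.
  apply: (rho_zero_of_dom_diff rhoC (c := c) SH (SR_comp Sx SH) _ Hx).
  - by rewrite dom_pid_on.
  - by rewrite dom_pid_on (subsetP cH) // !inE eqxx.
  - by rewrite dom_comp_pid_on in_setI negb_and cx orbT.
have x0 : rho (pperm w^-1 ∘ t) pzero.
  apply: (rho_zero_of_rank_le SH _ nx _ H0); first by rewrite dom_pid_on.
  by rewrite /rk dom_pid_on (card_transversal HH); exact: nonunit_rank nx.
apply: (universal_of_unit_zero (group1 _)).
exact: (congr_trans rhoC (SR_pperm (group1 _)) Sx SR_zero one_x x0).
Qed.

Lemma rho_not_Hrel_zero s t : SR s -> SR t -> rho s t -> ~ Hrel s t -> universal \/ rho s pzero.
Proof.
move=> Ss St st nH; have ts := congr_sym rhoC Ss St st.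
case: (SR_cases Ss) => [[v Wv sv]|ns]; case: (SR_cases St) => [[w Ww tw]|nt].
- by case: nH; rewrite sv tw /Hrel !dom_pperm !img_pperm.
- by left; apply: (universal_of_rho_unit_nonunit Wv nt); rewrite -sv.
- by left; apply: (universal_of_rho_unit_nonunit Ww ns); rewrite -tw.
right; have [[_ ds ims] [_ dt imt]] := (ns, nt).
have t0_s0 : rho t pzero -> rho s pzero by apply: (congr_trans rhoC Ss St SR_zero st).
have [sd|/subsetPn [c cs ct]] := boolP (dom s \subset dom t);
  last exact: (rho_zero_of_dom_diff rhoC Ss St ds st cs ct).
have [td|/subsetPn [c ct cs]] := boolP (dom t \subset dom s);
  last exact/t0_s0/(rho_zero_of_dom_diff rhoC St Ss dt ts ct cs).
have [si|/subsetPn [b bs bt]] := boolP (img s \subset img t);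
  last exact: (rho_zero_of_img_diff rhoC Ss St ims st bs bt).
have [ti|/subsetPn [b bt bs]] := boolP (img t \subset img s);
  last exact/t0_s0/(rho_zero_of_img_diff rhoC St Ss imt ts bt bs).
by case: nH; split; apply/eqP; rewrite eqEsubset ?sd ?si.
Qed.

Lemma rho_zero_of_Hrel_neq s t : nonunit s -> SR t -> Hrel s t -> rho s t -> s != t ->
  exists z, [/\ SR z, (rk z).+1 = rk s & rho z pzero].
Proof.
move=> ns St [ds_dt is_it] st s_t; have Ss := SR_nonunit ns; have [Is ds ims] := ns.
have dom_eq x : (s x == None) = (t x == None).
  by move/setP/(_ x): ds_dt; rewrite !domE => /negb_inj.
have [c] : exists c, s c != t c.
  apply/existsP; apply: contraNT s_t => /existsPn E.
  by apply/eqP/ffunP => x; apply/eqP/negPn/E.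
case sc: (s c) => [b|]; last by move: (dom_eq c); rewrite sc eqxx => /esym/eqP ->.
case tc: (t c) => [b'|]; last by move: (dom_eq c); rewrite sc tc.
move=> bb'; have [c' sc'] : exists c', s c' = Some b'.
  by apply/imgP; rewrite is_it; apply/imgP; exists c.
(* [t c = s c'] with [c' != c]: removing [c'] from the domain leaves [t c] in the
   image of [t] only. *)
set D := dom s :\ c'.
have pD : proper_admissible D by apply: proper_admissibleS ds; apply: subsetDl.
have SD := SR_pid_on pD.
have [Sz Sz'] := (SR_comp Ss SD, SR_comp St SD).
have zz' : rho (s ∘ pid_on D) (t ∘ pid_on D) := congr_mulr rhoC SD Ss St st.
have cD : c \in D.
  rewrite in_setD1 domE sc andbT; apply: contraNneq bb' => cc'.
  by rewrite -sc -sc' cc'.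
have b'z' : b' \in img (t ∘ pid_on D) by apply/imgP; exists c; rewrite pcompE ffunE cD /= tc.
have b'z : b' \notin img (s ∘ pid_on D).
  apply/imgP => -[x]; rewrite pcompE ffunE; case: ifP => //= xD sx.
  by move: xD; rewrite (Is _ _ _ sx sc') !inE eqxx.
have piz' : proper_admissible (img (t ∘ pid_on D)).
  by apply: proper_admissibleS ims; rewrite is_it; apply: img_comp_sub.
have z'0 := rho_zero_of_img_diff rhoC Sz' Sz piz' (congr_sym rhoC Sz Sz' zz') b'z' b'z.
exists (s ∘ pid_on D); split => //; last exact: (congr_trans rhoC Sz Sz' SR_zero zz' z'0).
rewrite /rk dom_comp_pid_on (setIidPl (subsetDl _ _)) (cardsD1 c' (dom s)).
by rewrite [c' \in _]domE sc'.
Qed.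

Lemma rho_zero_of_distinct_units v w : v \in Wset n -> w \in Wset n ->
  rho (pperm v) (pperm w) -> v != w -> exists z, [/\ SR z, rk z = m & rho z pzero].
Proof.
move=> Wv Ww vw v_w; set g := (w * v^-1)%g.
have Wg : g \in Wset n by rewrite groupM ?groupV.
have Svi : SR (pperm v^-1) by apply/SR_pperm/groupVr.
have one_g : rho (pperm 1) (pperm g).
  by have := congr_mull rhoC Svi (SR_pperm Wv) (SR_pperm Ww) vw; rewrite !pperm_comp mulgV.
have [c gc] : exists c, g c != c.
  apply/existsP; apply: contraNT v_w => /existsPn E.
  rewrite eq_sym eq_mulgV1; apply/eqP/permP => x; rewrite perm1.
  exact/eqP/negPn/E.
(* Restricting [pperm 1 rho pperm g] to a transversal [D] with [c \in D] and
   [g c \notin D] relates [pid_on D] to a map undefined at [c]. *)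
have c_gc : c != theta (theta (g c)) by rewrite thetaK eq_sym.
have [D HD cD] := transversal_extension (proper_admissible2 c_gc).
have pD := transversal_proper_admissible HD; have SD := SR_pid_on pD.
have c_in : c \in D by apply: (subsetP cD); rewrite !inE eqxx.
have gc_out : g c \notin D by rewrite -HD; apply: (subsetP cD); rewrite !inE eqxx orbT.
have Sy : SR (pid_on D ∘ (pperm g ∘ pid_on D)) by apply/SR_comp/SR_comp/SD/(SR_pperm Wg).
have Dy : rho (pid_on D) (pid_on D ∘ (pperm g ∘ pid_on D)).
  have := congr_mulr rhoC SD (SR_pperm (group1 _)) (SR_pperm Wg) one_g.
  rewrite pperm1_comp => Dg.
  by have := congr_mull rhoC SD SD (SR_comp (SR_pperm Wg) SD) Dg; rewrite pid_onI setIid.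
exists (pid_on D); split => //; first by rewrite /rk dom_pid_on card_transversal.
apply: (rho_zero_of_dom_diff rhoC (c := c) SD Sy _ Dy); rewrite ?dom_pid_on //.
by rewrite domE !pcompE [pid_on D c]ffunE c_in /= ffunE /= ffunE (negbTE gc_out).
Qed.

Section SymmetricKernel.
Variable k : nat.
Hypothesis k_le_m : k <= m.
Local Notation lperm := (lperm k_le_m).
Local Notation SR_lperm := (SR_lperm k_le_m).

Definition kerS : {set {perm 'I_k}} := [set mu | `[< rho (lperm mu) (lperm 1) >]].

Lemma group_set_kerS : group_set kerS.
Proof.
apply/group_setP; split; first by rewrite inE; apply/asboolP; exact: (congr_refl rhoC (SR_lperm _)).
move=> mu nu; rewrite !inE => /asboolP mu1 /asboolP nu1; apply/asboolP.
have := congr_mull rhoC (SR_lperm nu) (SR_lperm mu) (SR_lperm 1) mu1.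
rewrite !lperm_comp mul1g => munu.
exact: (congr_trans rhoC (SR_lperm _) (SR_lperm _) (SR_lperm _) munu nu1).
Qed.

Lemma kerS_normal : (kerS <| [set: {perm 'I_k}])%g.
Proof.
rewrite /normal subsetT; apply: conjg_closed_norms => mu g; rewrite !inE => /asboolP mu1 _.
apply/asboolP; have := congr_mulr rhoC (SR_lperm g^-1) (SR_lperm mu) (SR_lperm 1) mu1.
rewrite !lperm_comp => H; have := congr_mull rhoC (SR_lperm g) (SR_lperm _) (SR_lperm _) H.
by rewrite !lperm_comp mulg1 mulVg -mulgA.
Qed.

Lemma rank_k_nonunit s : SR s -> rk s = k -> nonunit s.
Proof. by move=> Ss rks; apply: nonunit_of_rank Ss _; rewrite rks (leq_ltn_trans k_le_m m_lt_n). Qed.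

Lemma rho_of_relS s t : SR s -> rk s = k -> Hrel s t -> relS kerS s t -> rho s t.
Proof.
move=> Ss rks [ds_dt _] [mu]; rewrite inE => /asboolP mu1 [a [Ia Ha tas]].
have [Is ds ims] := rank_k_nonunit Ss rks.
have Sa : SR (plift a) by apply: (SR_plift k_le_m Ia _ ds) => i; apply/Ha; exists i.
have Stw nu : SR (twist k_le_m s a nu).
  by apply/SR_comp/(SR_inv Sa)/SR_comp/SR_lperm/SR_comp.
have := congr_sym rhoC (Stw mu) (Stw 1%g) (congr_mulr rhoC (SR_inv Sa) (SR_comp (SR_comp Ss Sa) (SR_lperm mu))
  (SR_comp (SR_comp Ss Sa) (SR_lperm 1)) (congr_mull rhoC (SR_comp Ss Sa) (SR_lperm mu) (SR_lperm 1) mu1)).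
by rewrite -(twist_eq k_le_m Ia Ha (esym ds_dt) tas) -(twist1 k_le_m Ia Ha).
Qed.

Lemma relS_of_rho s t : SR s -> SR t -> rk s = k -> Hrel s t -> rho s t -> relS kerS s t.
Proof.
move=> Ss St rks Hst st; have [Is ds ims] := rank_k_nonunit Ss rks.
have [a [Ia Ha]] := exists_enum_dom rks.
have [mu tas] := exists_perm_of_Hrel (SR_pinj St) Hst Ia Ha.
exists mu; last by exists a.
rewrite inE; apply/asboolP.
have aD i : a i \in dom s by apply/Ha; exists i.
have Sa : SR (plift a) := SR_plift k_le_m Ia aD ds.
have Sb : SR (pinv (plift a) ∘ pinv s) := SR_comp (SR_inv Sa) (SR_inv Ss).
have := congr_mulr rhoC Sa (SR_comp Sb Ss) (SR_comp Sb St) (congr_mull rhoC Sb Ss St st).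
have Et := twist_eq k_le_m Ia Ha (esym Hst.1) tas.
rewrite (untwist Is Ia aD (twist1 k_le_m Ia Ha)) (untwist Is Ia aD Et).
exact: (congr_sym rhoC (SR_lperm _) (SR_lperm _)).
Qed.

End SymmetricKernel.

Definition kerW : {set {perm 'I_n}} := [set w in Wset n | `[< rho (pperm w) (pperm 1) >]].

Lemma kerWP w : reflect (w \in Wset n /\ rho (pperm w) (pperm 1)) (w \in kerW).
Proof. by rewrite [_ \in kerW]inE; apply: (iffP andP) => -[Ww /asboolP w1]. Qed.

Lemma group_set_kerW : group_set kerW.
Proof.
have S1 := SR_pperm (group1 [group of Wset n]).
apply/group_setP; split; first by apply/kerWP; split; [exact: group1 | exact: (congr_refl rhoC S1)].
move=> v w /kerWP [Wv v1] /kerWP [Ww w1]; apply/kerWP; split; first exact: groupM.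
have := congr_mull rhoC (SR_pperm Ww) (SR_pperm Wv) S1 v1.
rewrite !pperm_comp mul1g => vw_w.
exact: (congr_trans rhoC (SR_pperm (groupM Wv Ww)) (SR_pperm Ww) S1 vw_w w1).
Qed.

Lemma kerW_normal : (kerW <| Wset n)%g.
Proof.
apply/andP; split; first by apply/subsetP => w /kerWP [].
apply: conjg_closed_norms => w g /kerWP [Ww w1] Wg.
have Wgi := groupVr Wg; apply/kerWP; split; first exact: groupJ.
have := congr_mulr rhoC (SR_pperm Wgi) (SR_pperm Ww) (SR_pperm (group1 _)) w1.
rewrite !pperm_comp mulg1 => H.
have := congr_mull rhoC (SR_pperm Wg) (SR_pperm (groupM Wgi Ww)) (SR_pperm Wgi) H.
by rewrite !pperm_comp mulVg conjgE mulgA.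
Qed.

Lemma rho_pperm v w : v \in Wset n -> w \in Wset n ->
  rho (pperm v) (pperm w) <-> (w * v^-1)%g \in kerW.
Proof.
move=> Wv Ww; have Svi : SR (pperm v^-1) by apply/SR_pperm/groupVr.
have Wwv : (w * v^-1)%g \in Wset n by rewrite groupM ?groupV.
split => [vw|/kerWP [_ wv1]].
- apply/kerWP; split => //; apply: (congr_sym rhoC (SR_pperm (group1 _)) (SR_pperm Wwv)).
  by have := congr_mull rhoC Svi (SR_pperm Wv) (SR_pperm Ww) vw; rewrite !pperm_comp mulgV.
- have := congr_mull rhoC (SR_pperm Wv) (SR_pperm Wwv) (SR_pperm (group1 _)) wv1.
  rewrite !pperm_comp mulgKV mul1g => wv.
  exact: (congr_sym rhoC (SR_pperm Ww) (SR_pperm Wv) wv).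
Qed.
(** * Classification of nonuniform congruences *)

Section Nonuniform.
Hypothesis rho_nonuniform : nonuniform rho.

Lemma not_universal : ~ universal.
Proof.
move=> univ; case: rho_nonuniform => s [t [Ss St []]].
exact: (congr_trans rhoC Ss SR_zero St (univ s Ss) (congr_sym rhoC St SR_zero (univ t St))).
Qed.

Lemma nonunit_of_rho_zero s : SR s -> rho s pzero -> nonunit s.
Proof.
move=> Ss s0; case: (SR_cases Ss) => // -[w Ww sw].
by case: not_universal; apply: (universal_of_unit_zero Ww); rewrite -sw.
Qed.

Lemma Hrel_of_rho_nonzero s t : SR s -> SR t -> rho s t -> ~ rho s pzero -> Hrel s t.
Proof.
move=> Ss St st s0; apply: contra_notP s0 => nH.
by case: (rho_not_Hrel_zero Ss St st nH) => // /not_universal.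
Qed.

Lemma unit_of_rho_unit w t : w \in Wset n -> SR t -> rho (pperm w) t ->
  exists2 v, v \in Wset n & t = pperm v.
Proof.
move=> Ww St wt; case: (SR_cases St) => // nt.
by case: not_universal; apply: universal_of_rho_unit_nonunit Ww nt wt.
Qed.

Definition ideal_rank := rk [arg max_(x > pzero | `[< SR x /\ rho x pzero >]) rk x].

Lemma ideal_rank_spec :
  (exists x, [/\ SR x, rho x pzero & rk x = ideal_rank]) /\
  forall z, SR z -> rho z pzero -> rk z <= ideal_rank.
Proof.
rewrite /ideal_rank; case: arg_maxnP => [|x /asboolP [Sx x0] xmax].
  by apply/asboolP; split; [exact: SR_zero | exact: (congr_refl rhoC SR_zero)].
by split; [exists x | move=> z Sz z0; apply/xmax/asboolP].
Qed.

Lemma ideal_rank_le_m : ideal_rank <= m.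
Proof.
have [[x [Sx x0 <-]] _] := ideal_rank_spec.
exact: nonunit_rank (nonunit_of_rho_zero Sx x0).
Qed.

Lemma rho_zero_iff s : SR s -> rho s pzero <-> rk s <= ideal_rank.
Proof.
move=> Ss; split => [|s_le]; first exact: ideal_rank_spec.2.
have [[x [Sx x0 rkx]] _] := ideal_rank_spec; have [_ dx _] := nonunit_of_rho_zero Sx x0.
apply: (rho_zero_of_rank_le Sx dx _ _ x0); last by rewrite rkx.
apply: nonunit_of_rank Ss _.
exact: leq_ltn_trans s_le (leq_ltn_trans ideal_rank_le_m m_lt_n).
Qed.

Lemma rho_iff_low_rank s t : SR s -> SR t -> rk s <= ideal_rank ->
  (rho s t <-> rk t <= ideal_rank).
Proof.
move=> Ss St /(rho_zero_iff Ss) s0; rewrite -(rho_zero_iff St); split => [st|t0].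
- exact: (congr_trans rhoC St Ss SR_zero (congr_sym rhoC Ss St st) s0).
- exact: (congr_trans rhoC Ss SR_zero St s0 (congr_sym rhoC St SR_zero t0)).
Qed.

Lemma rho_eq_of_high_rank s t : SR s -> SR t -> ideal_rank < m -> ideal_rank.+1 < rk s ->
  rho s t -> s = t.
Proof.
move=> Ss St r_lt_m high st; apply/eqP; apply: contraT => s_t.
have s0 : ~ rho s pzero by move/(rho_zero_iff Ss); rewrite leqNgt ltnW.
have Hst := Hrel_of_rho_nonzero Ss St st s0.
have [z [Sz rkz z0]] : exists z, [/\ SR z, ideal_rank < rk z & rho z pzero].
  case: (SR_cases Ss) => [[v Wv sv]|ns].
  - rewrite sv in st s_t; have [w Ww tw] := unit_of_rho_unit Wv St st; rewrite tw in st s_t.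
    have v_w : v != w by apply: (contraNneq _ s_t) => ->.
    have [z [Sz rkz z0]] := rho_zero_of_distinct_units Wv Ww st v_w.
    by exists z; rewrite rkz.
  - have [z [Sz rkz z0]] := rho_zero_of_Hrel_neq ns St Hst st s_t.
    by exists z; rewrite -ltnS rkz.
by have := ideal_rank_spec.2 z Sz z0; rewrite leqNgt rkz.
Qed.

Lemma rho_equivS (r_lt_m : ideal_rank < m) s t : SR s -> SR t ->
  (rho s t <-> equivS (kerS r_lt_m) s t).
Proof.
move=> Ss St; rewrite /equivS /equiv_gen.
have [s_low|s_ge] := ltnP (rk s) ideal_rank.+1; first by rewrite ltnS; apply: rho_iff_low_rank.
have [s_eq|s_ne] := eqVneq (rk s) ideal_rank.+1.
  split => [st|[Hst R]]; last exact: rho_of_relS Ss s_eq Hst R.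
  have s0 : ~ rho s pzero by move/(rho_zero_iff Ss); rewrite s_eq ltnn.
  have Hst := Hrel_of_rho_nonzero Ss St st s0.
  by split; last exact: relS_of_rho Ss St s_eq Hst st.
split => [|->]; last exact: (congr_refl rhoC St).
by apply: rho_eq_of_high_rank => //; rewrite ltn_neqAle eq_sym s_ne s_ge.
Qed.

Lemma rho_equivW : ideal_rank = m -> forall s t, SR s -> SR t ->
  (rho s t <-> equivW kerW s t).
Proof.
move=> r_m s t Ss St; rewrite /equivW /equiv_gen !SR_rank_lt_n // -r_m.
have [s_low|s_high] := leqP (rk s) ideal_rank; first exact: rho_iff_low_rank.
have [w Ww ->] : exists2 w, w \in Wset n & s = pperm w.
  by case: (SR_cases Ss) => // /nonunit_rank; rewrite -r_m leqNgt s_high.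
rewrite rk_pperm eqxx; split => [wt|[_ [mu mu_ker tmu]]].
- have [v Wv tv] := unit_of_rho_unit Ww St wt; rewrite tv in wt *.
  split; first by rewrite /Hrel !dom_pperm !img_pperm.
  exists (v * w^-1)%g; first exact/(rho_pperm Ww Wv).
  by move=> i; rewrite !ffunE permM permKV.
- have [Wmu _] := kerWP _ mu_ker.
  have -> : t = pperm (mu * w) by apply/ffunP => i; rewrite tmu !ffunE permM.
  by apply/(rho_pperm Ww (groupM Wmu Ww)); rewrite mulgK.
Qed.

End Nonuniform.
End Ideal.
End SymplecticRookMonoid.

Theorem theorem5p2 (m n : nat) (Hm : 0 < m) (Hn : n = m.*2)
  (rho : pmap_ n -> pmap_ n -> Prop) :
  congruence rho -> nonuniform rho ->
  (exists k : nat, exists N : {group {perm 'I_k}},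
     [/\ 1 <= k <= m, (N <| [set: {perm 'I_k}])%g &
         forall s t : pmap_ n, SR s -> SR t -> (rho s t <-> equivS N s t)])
  \/
  (exists N : {group {perm 'I_n}},
     (N <| Wset n)%g /\
     forall s t : pmap_ n, SR s -> SR t -> (rho s t <-> equivW N s t)).
Proof.
move=> rhoC rho_nu.
have [r_lt_m|r_ge_m] := ltnP (ideal_rank rho) m.
- left; exists (ideal_rank rho).+1, (Group (group_set_kerS Hm Hn rhoC r_lt_m)); split => //.
  + exact: kerS_normal.
  + exact: rho_equivS.
- right; exists (Group (group_set_kerW rhoC)); split; first exact: kerW_normal.
  apply: (rho_equivW Hm Hn rhoC rho_nu); apply/eqP; rewrite eqn_leq r_ge_m andbT.
  exact: (ideal_rank_le_m Hm Hn rhoC rho_nu).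
Qed.
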